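(* Let $k\geq 0$ and let $i,j$ be integers with $k+2\leq i,j\leq 2k+2$. Then $R_k^{\mathcal{CO}}(i,j)=i+j-k-2$, where $\mathcal{CO}$ is the class of cographs.
   Context: All graphs are finite and simple. For a graph $G$ and a nonnegative integer $k$, a $k$-sparse $j$-set is a set of $j$ vertices of $G$ inducing a subgraph of maximum degree at most $k$; a $k$-dense $i$-set is a set of $i$ vertices of $G$ that is $k$-sparse in the complement of $G$. For a graph class $\mathcal{G}$, $R_k^{\mathcal{G}}(i,j)$ is the smallest natural number $n$ such that every graph on $n$ vertices in $\mathcal{G}$ has either a $k$-dense $i$-set or a $k$-sparse $j$-set. A cograph is a graph containing no induced path on four vertices. *)

From mathcomp Require Import all_boot.
Set Implicit Arguments. Unset Strict Implicit. Unset Printing Implicit Defensive.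

Definition simple_graph (T : finType) (e : rel T) : Prop :=
  symmetric e /\ irreflexive e.

Definition compl_rel (T : finType) (e : rel T) : rel T :=
  fun x y => (x != y) && ~~ e x y.

Definition max_deg_le (T : finType) (e : rel T) (k : nat) (S : {set T}) : bool :=
  [forall x in S, #|[set y in S | e x y]| <= k].

Definition sparse_set (T : finType) (e : rel T) (k j : nat) (S : {set T}) : Prop :=
  #|S| = j /\ max_deg_le e k S.

Definition dense_set (T : finType) (e : rel T) (k i : nat) (S : {set T}) : Prop :=
  #|S| = i /\ max_deg_le (compl_rel e) k S.

Definition is_cograph (T : finType) (e : rel T) : Prop :=
  ~ exists a b c d : T,
      [/\ uniq [:: a; b; c; d],
          e a b && e b c && e c d &
          ~~ e a c && ~~ e b d && ~~ e a d].

Definition co_ramsey_prop (k i j n : nat) : Prop :=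
  forall e : rel 'I_n, simple_graph e -> is_cograph e ->
    exists S : {set 'I_n}, dense_set e k i S \/ sparse_set e k j S.

Definition is_co_ramsey (k i j N : nat) : Prop :=
  co_ramsey_prop k i j N /\ forall m, m < N -> ~ co_ramsey_prop k i j m.

From mathcomp Require Import all_boot zify.
Set Implicit Arguments. Unset Strict Implicit. Unset Printing Implicit Defensive.

(* Upper bound: a cograph on at least two vertices is disconnected or has a disconnected
   complement, and complementation swaps dense and sparse sets, so we may assume that the
   vertex set splits into two non-adjacent parts A and B with |B| <= |A|.  Any set of at
   most k+1 vertices is k-sparse, so t = min(|B|, k+1) vertices of B together with a
   k-sparse (j-t)-set of A form a k-sparse j-set; such a set of A is either arbitrary
   (j-t <= k+1) or provided by induction on A, which may yield a k-dense i-set instead.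
   Lower bound: a clique on i-1 vertices plus isolated vertices has no k-dense i-set
   (it contains an isolated vertex with i-1 > k non-neighbours) and no k-sparse j-set
   (it contains at most k+1 clique vertices). *)

Section Cographs.
Variable T : finType.
Implicit Types (e : rel T) (A B C S U : {set T}).

Lemma eq_max_deg_le e1 e2 k S : e1 =2 e2 -> max_deg_le e1 k S = max_deg_le e2 k S.
Proof.
move=> e12; apply: eq_forallb => x.
by have -> : [set y in S | e1 x y] = [set y in S | e2 x y] by apply/setP => y; rewrite !inE e12.
Qed.

Lemma max_deg_le_small e k S : irreflexive e -> #|S| <= k.+1 -> max_deg_le e k S.
Proof.
move=> irr leSk; apply/forall_inP => x xS.
have sub : [set y in S | e x y] \subset S :\ x.
  apply/subsetP => y; rewrite !inE => /andP[yS exy]; rewrite yS andbT.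
  by apply: contraTneq exy => ->; rewrite irr.
by rewrite -ltnS (leq_trans _ leSk) // (cardsD1 x S) xS ltnS subset_leq_card.
Qed.

Lemma max_deg_le_card_star e k S C x : max_deg_le e k S -> C \subset S -> x \in C ->
  {in C, forall y, y != x -> e x y} -> #|C| <= k.+1.
Proof.
move=> /forall_inP degS sCS xC adjx; rewrite (cardsD1 x C) xC ltnS.
apply: leq_trans (degS x (subsetP sCS x xC)); apply: subset_leq_card.
by apply/subsetP => y; rewrite !inE => /andP[yx yC]; rewrite (subsetP sCS) ?adjx.
Qed.

Lemma exists_subset_card A n : n <= #|A| -> exists2 S : {set T}, S \subset A & #|S| = n.
Proof.
case/card_geqP => s [uniq_s <- sA]; exists [set x in s].
  by apply/subsetP => x; rewrite inE => /sA.
by rewrite cardsE; apply/card_uniqP.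
Qed.

Definition nonadj e A B := forall x y, x \in A -> y \in B -> ~~ e x y.

Lemma nonadj_sym e A B : symmetric e -> nonadj e A B -> nonadj e B A.
Proof. by move=> sym nAB x y xB yA; rewrite sym nAB. Qed.

Lemma sparse_setU e k A B S1 S2 n1 n2 : symmetric e -> nonadj e A B -> [disjoint A & B] ->
  S1 \subset A -> S2 \subset B -> sparse_set e k n1 S1 -> sparse_set e k n2 S2 ->
  sparse_set e k (n1 + n2) (S1 :|: S2).
Proof.
move=> sym nAB dAB sS1 sS2 [<- /forall_inP deg1] [<- /forall_inP deg2]; split.
  rewrite cardsU (disjoint_setI0 (disjointW sS1 sS2 dAB)) cards0; lia.
have degU S S' : nonadj e S S' -> {in S, forall x, #|[set y in S | e x y]| <= k} ->
    {in S, forall x, #|[set y in S :|: S' | e x y]| <= k}.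
  move=> nSS' degS x xS; apply: leq_trans (degS x xS); apply: subset_leq_card.
  apply/subsetP => y; rewrite !inE => /andP[/orP[yS|yS'] exy]; first by rewrite yS.
  by move: (nSS' x y xS yS'); rewrite exy.
apply/forall_inP => x; rewrite inE => /orP[xS1|xS2].
  apply: degU xS1 => // u v uS1 vS2; exact: nAB (subsetP sS1 u uS1) (subsetP sS2 v vS2).
rewrite setUC; apply: degU xS2 => // u v uS2 vS1.
exact: nonadj_sym nAB _ _ (subsetP sS2 u uS2) (subsetP sS1 v vS1).
Qed.

Lemma compl_relK e : irreflexive e -> compl_rel (compl_rel e) =2 e.
Proof. by move=> irr x y; rewrite /compl_rel; case: eqVneq => [->|] /=; rewrite ?irr ?negbK. Qed.

Lemma compl_simple_graph e : simple_graph e -> simple_graph (compl_rel e).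
Proof. by move=> [sym _]; split=> [x y|x]; rewrite /compl_rel ?eqxx // eq_sym sym. Qed.

Lemma cograph_noP4 e x y z w : simple_graph e -> is_cograph e ->
  e x y -> e y z -> e z w -> ~~ e x z -> ~~ e y w -> ~~ e x w -> False.
Proof.
move=> [sym irr] cog exy eyz ezw nxz nyw nxw; apply: cog; exists x, y, z, w.
have nxy : x != y by apply: contraTneq exy => ->; rewrite irr.
have nyz : y != z by apply: contraTneq eyz => ->; rewrite irr.
have nzw : z != w by apply: contraTneq ezw => ->; rewrite irr.
have nxz' : x != z by apply: contraNneq nxw => ->.
have nxw' : x != w by apply: contraNneq nxz => ->; rewrite sym.
have nyw' : y != w by apply: contraNneq nxw => <-.
split; last by rewrite nxz nyw nxw.
  by rewrite /= !inE !negb_or nxy nxz' nxw' nyz nyw' nzw.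
by rewrite exy eyz ezw.
Qed.

Lemma compl_cograph e : simple_graph e -> is_cograph e -> is_cograph (compl_rel e).
Proof.
move=> sg cog [a [b [c [d [uniq_abcd /andP[/andP[eab ebc] ecd] /andP[/andP[nac nbd] nad]]]]]].
move: uniq_abcd; rewrite /= !inE !negb_or andbT => /and3P[/and3P[ab ac ad] /andP[bc bd] cd].
move: eab ebc ecd nac nbd nad; rewrite /compl_rel ab bc cd ac bd ad /= !negbK.
move=> nab nbc ncd eac ebd ead.
have [sym _] := sg.
by apply: (@cograph_noP4 e c a d b) => //; rewrite sym.
Qed.

Definition splits e U A :=
  [/\ A \subset U, A != set0, U :\: A != set0 & nonadj e A (U :\: A)].

Definition decomposable e U :=
  (exists A, splits e U A) \/ (exists A, splits (compl_rel e) U A).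

Lemma splitsC e U A : symmetric e -> splits e U A -> splits e U (U :\: A).
Proof.
move=> sym [sAU nA nUA nadj]; rewrite /splits setDDr setDv set0U (setIidPr sAU).
by split; rewrite ?subsetDl //; apply: nonadj_sym.
Qed.

Lemma decomposable_compl e U :
  irreflexive e -> decomposable (compl_rel e) U -> decomposable e U.
Proof.
move=> irr [spl|[A [sAU nA nUA nadj]]]; first by right.
by left; exists A; split=> // x y xA yUA; rewrite -(compl_relK irr) nadj.
Qed.

Lemma splits_set1 e U v : v \in U -> U :\ v != set0 -> {in U :\ v, forall y, ~~ e v y} ->
  splits e U [set v].
Proof.
move=> vU nUv nvU; split=> //; first by rewrite sub1set.
  by apply/set0Pn; exists v; rewrite inE.
by move=> x y /set1P ->; apply: nvU.
Qed.

Lemma splits_add_nonadj e U v A : symmetric e -> v \in U -> splits e (U :\ v) A ->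
  {in A, forall x, ~~ e v x} -> splits e U A.
Proof.
move=> sym vU [sA nA nB nadj] nvA.
have vA : v \notin A by apply: contraTN vU => /(subsetP sA); rewrite !inE eqxx.
split=> //; first exact: subset_trans sA (subsetDl _ _).
  by apply/set0Pn; exists v; rewrite inE vA.
move=> x y xA /setDP[yU yA]; case: (eqVneq y v) => [->|yv].
  by rewrite sym nvA.
by apply: nadj => //; rewrite !inE yA yv yU.
Qed.

Lemma cograph_nonadj_same_side e A B x y v z : simple_graph e -> is_cograph e ->
  nonadj e A B -> x \in A -> y \in A :|: B -> z \in B -> ~~ e x v -> e y v -> e v z -> ~~ e x y.
Proof.
move=> sg cog nadj xA /setUP[yA|yB] zB nxv eyv evz; last exact: nadj.
by apply/negP => exy; apply: (@cograph_noP4 e x y v z) => //; apply: nadj.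
Qed.

Lemma cograph_splits_add e U v A : simple_graph e -> is_cograph e -> v \in U ->
  splits e (U :\ v) A -> decomposable e U.
Proof.
move=> sg cog vU spA; have [sym irr] := sg.
set B := (U :\ v) :\: A; have spB : splits e (U :\ v) B by exact: splitsC.
have [sA _ _ nAB] := spA.
have UvAB : U :\ v = A :|: B by rewrite -{1}(setID (U :\ v) A) (setIidPr sA).
have [nvA|/forall_inPn[a aA /negbNE eva]] := boolP [forall x in A, ~~ e v x].
  by left; exists A; apply: splits_add_nonadj spA _ => // x /(forall_inP nvA).
have [nvB|/forall_inPn[b bB /negbNE evb]] := boolP [forall x in B, ~~ e v x].
  by left; exists B; apply: splits_add_nonadj spB _ => // x /(forall_inP nvB).
have bUv : b \in U :\ v by rewrite UvAB inE bB orbT.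
(* v has neighbours a in A and b in B.  Its non-neighbours M have no neighbour outside M:
   an edge x-y with y adjacent to v would give the induced path x-y-v-z, where z is the
   one of a, b lying on the other side of the split from x and y. *)
set M := [set y in U :\ v | ~~ e v y].
have [M0|[m mM]] := set_0Vmem M.
  right; exists [set v]; apply: splits_set1 => //; first by apply/set0Pn; exists b.
  move=> y yUv; rewrite /compl_rel negb_and !negbK; apply/orP; right.
  by apply: contraT => nvy; have := in_set0 y; rewrite -M0 inE yUv nvy.
left; exists M; split.
- by apply/subsetP => y; rewrite !inE => /andP[/andP[_ ->]].
- by apply/set0Pn; exists m.
- by apply/set0Pn; exists v; rewrite !inE eqxx vU andbT.
move=> x y /setIdP[xUv nvx] /setDP[yU yM].
case: (eqVneq y v) => [->|yv]; first by rewrite sym.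
have yUv : y \in U :\ v by rewrite !inE yv yU.
have evy : e v y by apply: contraNT yM => nvy; rewrite inE yUv nvy.
move: xUv; rewrite UvAB => /setUP[xA|xB]; rewrite UvAB in yUv.
  by apply: (@cograph_nonadj_same_side e A B x y v b) => //; rewrite sym.
apply: (@cograph_nonadj_same_side e B A x y v a) => //; rewrite 1?setUC 1?sym //.
exact: nonadj_sym.
Qed.

Lemma cograph_decomposable e U :
  simple_graph e -> is_cograph e -> 1 < #|U| -> decomposable e U.
Proof.
have [n] := ubnP #|U|; elim: n => // n IH in e U *; rewrite ltnS => leUn sg cog ltU1.
have [sym irr] := sg.
have /card_gt0P[v vU] : 0 < #|U| by exact: ltnW.
have cardU : #|U| = #|U :\ v|.+1 by rewrite (cardsD1 v U) vU.
have [ltUv1|] := ltnP 1 #|U :\ v|.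
  have [[A spA]|[A spA]] := IH e (U :\ v) ltac:(lia) sg cog ltUv1.
    exact: cograph_splits_add spA.
  apply: decomposable_compl irr _.
  exact: cograph_splits_add (compl_simple_graph sg) (compl_cograph sg cog) vU spA.
move=> leUv1; have /cards1P[w Uvw] : #|U :\ v| == 1 by apply/eqP; lia.
have nUv : U :\ v != set0 by rewrite Uvw; apply/set0Pn; exists w; rewrite inE.
have [evw|nvw] := boolP (e v w); [right|left]; exists [set v]; apply: splits_set1 => //;
  by rewrite Uvw => y /set1P ->; rewrite /compl_rel ?evw ?andbF.
Qed.

Definition dense_or_sparse_in e k a b U :=
  exists2 S : {set T}, S \subset U & dense_set e k a S \/ sparse_set e k b S.

Lemma dense_or_sparse_in_compl e k a b U : irreflexive e ->
  dense_or_sparse_in (compl_rel e) k b a U -> dense_or_sparse_in e k a b U.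
Proof.
move=> irr [S sSU [[cS dS]|spS]]; exists S => //; last by left.
by right; split; rewrite // -(eq_max_deg_le _ _ (compl_relK irr)).
Qed.

Lemma dense_or_sparse_in_nonadj e k a b U A : symmetric e -> irreflexive e ->
  A \subset U -> nonadj e A (U :\: A) -> #|U :\: A| <= #|A| ->
  (forall b', k + 2 <= b' <= b -> a + b' <= #|A| + k + 2 -> dense_or_sparse_in e k a b' A) ->
  k + 2 <= a -> k + 2 <= b <= 2 * k + 2 -> a + b <= #|U| + k + 2 ->
  dense_or_sparse_in e k a b U.
Proof.
move=> sym irr sAU nadj leBA IH lea /andP[leb geb] leab.
set B := U :\: A in nadj leBA *.
have cardU : #|A| + #|B| = #|U| by rewrite -(cardsID A U) (setIidPr sAU).
have dAB : [disjoint A & B].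
  by rewrite -setI_eq0; apply/eqP/setP => x; rewrite !inE; case: (x \in A); rewrite ?andbF.
set t := minn #|B| k.+1; have tE : t = minn #|B| k.+1 by [].
have [S1 sS1B cS1] := exists_subset_card (geq_minl #|B| k.+1).
have spS1 : sparse_set e k t S1 by split; rewrite // max_deg_le_small // cS1 geq_minr.
have sparse_in_A S2 : S2 \subset A -> sparse_set e k (b - t) S2 -> dense_or_sparse_in e k a b U.
  move=> sS2A spS2; exists (S2 :|: S1).
    by rewrite subUset (subset_trans sS2A sAU) (subset_trans sS1B (subsetDl _ _)).
  right; have -> : b = b - t + t by lia.
  exact: sparse_setU sym nadj dAB sS2A sS1B spS2 spS1.
have [ltbt|gebt] := leqP (k + 2) (b - t).
  have [S sSA [dS|spS]] := IH (b - t) ltac:(lia) ltac:(lia); last exact: sparse_in_A spS.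
  by exists S; [exact: subset_trans sSA sAU | left].
have lebtA : b - t <= #|A| by lia.
have [S2 sS2A cS2] := exists_subset_card lebtA.
by apply: sparse_in_A sS2A _; split; rewrite // max_deg_le_small // cS2; lia.
Qed.

Lemma dense_or_sparse_in_splits e k a b U A :
  symmetric e -> irreflexive e -> splits e U A ->
  (forall U' b', U' \proper U -> k + 2 <= b' <= b -> a + b' <= #|U'| + k + 2 ->
     dense_or_sparse_in e k a b' U') ->
  k + 2 <= a -> k + 2 <= b <= 2 * k + 2 -> a + b <= #|U| + k + 2 ->
  dense_or_sparse_in e k a b U.
Proof.
move=> sym irr spA IH lea leb leab; wlog leBA : A spA / #|U :\: A| <= #|A|.
  move=> wlogA; have [|ltAB] := leqP #|U :\: A| #|A|; first exact: wlogA.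
  have [sAU _ _ _] := spA; apply: (wlogA (U :\: A)); first exact: splitsC.
  by rewrite setDDr setDv set0U (setIidPr sAU) ltnW.
have [sAU _ nUA nadj] := spA.
apply: dense_or_sparse_in_nonadj leBA _ lea leb leab => // b' leb' leab'.
by apply: IH leb' leab'; rewrite properE sAU -setD_eq0 nUA.
Qed.

Lemma cograph_dense_or_sparse_in e k a b U : simple_graph e -> is_cograph e ->
  k + 2 <= a <= 2 * k + 2 -> k + 2 <= b <= 2 * k + 2 -> a + b <= #|U| + k + 2 ->
  dense_or_sparse_in e k a b U.
Proof.
have [n] := ubnP #|U|; elim: n => // n IH in e a b U *; rewrite ltnS => leUn sg cog ha hb hab.
have IHU e' a' b' : simple_graph e' -> is_cograph e' ->
    k + 2 <= a' <= 2 * k + 2 -> b' <= 2 * k + 2 ->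
    forall U' b'', U' \proper U -> k + 2 <= b'' <= b' -> a' + b'' <= #|U'| + k + 2 ->
    dense_or_sparse_in e' k a' b'' U'.
  move=> sg' cog' ha' hb' U' b'' /proper_card ltU' hb'' hab'.
  by apply: IH => //; lia.
have ltU1 : 1 < #|U| by lia.
have [/andP[lea gea] /andP[leb geb]] := (ha, hb).
have [sym irr] := sg.
have [[A spA]|[A spA]] := cograph_decomposable sg cog ltU1.
  exact: dense_or_sparse_in_splits sym irr spA (IHU e a b sg cog ha geb) lea hb hab.
have [sg' cog'] := (compl_simple_graph sg, compl_cograph sg cog); have [sym' irr'] := sg'.
apply: dense_or_sparse_in_compl irr _.
apply: dense_or_sparse_in_splits sym' irr' spA (IHU _ b a sg' cog' hb gea) leb ha _.
by rewrite addnC.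
Qed.

End Cographs.

Section CliqueBelow.
Variables m c : nat.

Lemma card_ord_lt : #|[set x : 'I_m | x < c]| = minn c m.
Proof.
have widen_inj : injective (widen_ord (geq_minr c m)).
  by move=> x y /(congr1 val) xy; apply: val_inj.
rewrite -[RHS]card_ord -cardsT -(card_imset _ widen_inj).
apply: eq_card => x; rewrite inE; apply/idP/imsetP => [xc|[y _ ->]].
  have xcm : x < minn c m by rewrite leq_min xc ltn_ord.
  by exists (Ordinal xcm); last apply: val_inj.
by have := ltn_ord y; rewrite leq_min => /andP[].
Qed.

Definition clique_below : rel 'I_m := fun x y => [&& x != y, x < c & y < c].

Lemma clique_below_simple : simple_graph clique_below.
Proof. by split=> [x y|x]; rewrite /clique_below ?eqxx // eq_sym [(x < c) && _]andbC. Qed.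

Lemma clique_below_cograph : is_cograph clique_below.
Proof.
move=> [a [b [d [w [uniq_abdw /andP[/andP[/and3P[_ ac _] /and3P[_ _ dc]] _]]]]]].
move=> /andP[/andP[nad _] _]; move: uniq_abdw nad.
by rewrite /= !inE !negb_or /clique_below ac dc => /and3P[/and3P[_ -> _] _ _].
Qed.

Lemma clique_below_dense k i S : dense_set clique_below k i S -> i <= maxn c k.+1.
Proof.
move=> [<- degS]; rewrite leq_max.
have [sSL|/subsetPn[v vS]] := boolP (S \subset [set x : 'I_m | x < c]).
  by rewrite (leq_trans (subset_leq_card sSL)) // card_ord_lt geq_minl.
rewrite inE => nvc; apply/orP; right.
apply: (max_deg_le_card_star degS (subxx S) vS) => y _ yv.
by rewrite /compl_rel /clique_below eq_sym yv (negbTE nvc) andbF.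
Qed.

Lemma clique_below_sparse k j S : sparse_set clique_below k j S -> j <= k.+1 + (m - c).
Proof.
set L := [set x : 'I_m | x < c]; move=> [<- degS]; rewrite -(cardsID L S).
have inL : #|S :&: L| <= k.+1.
  have [->|[x xSL]] := set_0Vmem (S :&: L); first by rewrite cards0.
  apply: (max_deg_le_card_star degS (subsetIl _ _) xSL) => y /setIP[_ yL] yx.
  move: xSL => /setIP[_ xL]; rewrite /L !inE in xL yL.
  by rewrite /clique_below eq_sym yx xL yL.
have outL : #|S :\: L| <= m - c.
  have := cardsC L; rewrite card_ord card_ord_lt => cardL.
  by rewrite setDE (leq_trans (subset_leq_card (subsetIr _ _))) //; lia.
exact: leq_add.
Qed.

End CliqueBelow.

Lemma co_ramsey_propN k i j m : k + 2 <= i -> k + 2 <= j -> m < i + j - k - 2 ->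
  ~ co_ramsey_prop k i j m.
Proof.
move=> hi hj hm /(_ _ (@clique_below_simple m i.-1) (@clique_below_cograph m i.-1)).
by case=> S [/clique_below_dense|/clique_below_sparse]; lia.
Qed.

Theorem lemma7p2 (k i j : nat) :
  k + 2 <= i <= 2 * k + 2 -> k + 2 <= j <= 2 * k + 2 ->
  is_co_ramsey k i j (i + j - k - 2).
Proof.
move=> hi hj; split=> [e sg cog|m ltm]; last by apply: co_ramsey_propN; lia.
have [|S _ dsS] := cograph_dense_or_sparse_in (U := [set: 'I_(i + j - k - 2)]) sg cog hi hj.
  by rewrite cardsT card_ord; lia.
by exists S.
Qed.
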